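(* There exists a curve $\Gamma$ in the Euclidean plane $\mathbb{R}^2$ such that $\mathcal{H}^1(\Gamma)<\infty$ and $S_{\Gamma,2-\epsilon}(\mathscr{G})=\infty$ for every multiresolution family $\mathscr{G}$ for $\Gamma$ (of any inflation factor $>1$) and every $\epsilon\in(0,2)$.
   Context: $\mathbb{R}^2$ carries the Euclidean norm. For a nonempty set $E\subset\mathbb{R}^2$ and a set $Q$ of positive diameter, the Jones beta number is $\beta_E(Q)=\inf_L\sup_{x\in E\cap Q}\mathrm{dist}(x,L)/\mathrm{diam}\,Q$ if $E\cap Q\neq\emptyset$, where $L$ ranges over all lines, and $\beta_E(Q)=0$ if $E\cap Q=\emptyset$. For $\rho>0$, a $\rho$-net for $E$ is a set $X\subset E$ such that $|y-z|\geq\rho$ for all distinct $y,z\in X$ and $\mathrm{dist}(x,X)<\rho$ for all $x\in E$. A multiresolution family for $E$ with inflation factor $A>1$ is the collection of closed balls $\mathscr{G}=\{B(x,A2^{-k}):x\in X_k,\ k\in\mathbb{Z}\}$ (indexed by the pairs $(k,x)$), where $(X_k)_{k\in\mathbb{Z}}$ is a nested family ($X_k\subset X_{k+1}$) and each $X_k$ is a $2^{-k}$-net for $E$. For $0<r<\infty$, $S_{E,r}(\mathscr{G})=\mathrm{diam}\,E+\sum_{Q\in\mathscr{G}}\beta_E(Q)^r\,\mathrm{diam}\,Q$. A curve is the image of a continuous map from $[0,1]$. *)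

From Stdlib Require Import Reals Lra List ClassicalEpsilon.
Open Scope R_scope.

Definition pt := (R * R)%type.

Definition dist (x y : pt) : R :=
  sqrt ((fst x - fst y) ^ 2 + (snd x - snd y) ^ 2).

(* Supremum of a set of reals (least upper bound when the set is nonempty
   and bounded above; junk value 0 otherwise), and infimum. *)
Definition Rsup (P : R -> Prop) : R :=
  match excluded_middle_informative (bound P /\ exists x, P x) with
  | left h => proj1_sig (completeness P (proj1 h) (proj2 h))
  | right _ => 0
  end.

Definition Rinf (P : R -> Prop) : R := - Rsup (fun y => P (- y)).

Definition diam (E : pt -> Prop) : R :=
  Rsup (fun d => exists x y, E x /\ E y /\ d = dist x y).

Definition is_line (L : pt -> Prop) : Prop :=
  exists (p v : pt), v <> (0, 0) /\
    forall z, L z <-> exists t : R, z = (fst p + t * fst v, snd p + t * snd v).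

Definition dist_set (x : pt) (L : pt -> Prop) : R :=
  Rinf (fun d => exists y, L y /\ d = dist x y).

Definition beta (E Q : pt -> Prop) : R :=
  match excluded_middle_informative (exists x, E x /\ Q x) with
  | left _ =>
      Rinf (fun b => exists L, is_line L /\
              b = Rsup (fun s => exists x, E x /\ Q x /\ s = dist_set x L) / diam Q)
  | right _ => 0
  end.

Definition rpow (b r : R) : R :=
  match Rlt_dec 0 b with left _ => Rpower b r | right _ => 0 end.

Definition cball (x : pt) (r : R) : pt -> Prop := fun y => dist x y <= r.

Definition pow2m (k : Z) : R := powerRZ 2 (- k).

Definition is_net (E X : pt -> Prop) (rho : R) : Prop :=
  (forall x, X x -> E x) /\
  (forall y z, X y -> X z -> y <> z -> dist y z >= rho) /\
  (forall x, E x -> exists y, X y /\ dist x y < rho).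

(* nested family of 2^{-k}-nets; the multiresolution family with inflation
   factor A is {B(x, A 2^{-k}) : x in X_k, k in Z}, indexed by (k,x). *)
Definition multires_nets (E : pt -> Prop) (X : Z -> pt -> Prop) : Prop :=
  (forall k x, X k x -> X (k + 1)%Z x) /\
  (forall k, is_net E (X k) (pow2m k)).

Definition S_term (E : pt -> Prop) (A r : R) (kx : Z * pt) : R :=
  let Q := cball (snd kx) (A * pow2m (fst kx)) in
  rpow (beta E Q) r * diam Q.

(* S_{E,r}(G) = infinity: the partial sums of diam E + sum over the
   (nonnegative) terms indexed by pairs (k,x), x in X_k, are unbounded. *)
Definition S_infinite (E : pt -> Prop) (A : R) (X : Z -> pt -> Prop) (r : R) : Prop :=
  forall M : R, exists l : list (Z * pt),
    NoDup l /\ (forall kx, In kx l -> X (fst kx) (snd kx)) /\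
    diam E + fold_right (fun kx acc => S_term E A r kx + acc) 0 l > M.

Definition continuous_on_01 (g : R -> pt) : Prop :=
  forall t, 0 <= t <= 1 -> forall eps, eps > 0 -> exists delta, delta > 0 /\
    forall s, 0 <= s <= 1 -> Rabs (s - t) < delta -> dist (g s) (g t) < eps.

Definition image01 (g : R -> pt) : pt -> Prop :=
  fun z => exists t, 0 <= t <= 1 /\ z = g t.

(* H^1(E) < infinity: sup_{delta>0} H^1_delta(E) < infinity, where
   H^1_delta(E) = inf { sum_n diam U_n : E subset U_n U_n, diam U_n <= delta }.
   (d n) is an upper bound on diam (U n). *)
Definition H1_finite (E : pt -> Prop) : Prop :=
  exists M : R, forall delta, delta > 0 ->
    exists (U : nat -> pt -> Prop) (d : nat -> R),
      (forall x, E x -> exists n, U n x) /\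
      (forall n, 0 <= d n <= delta) /\
      (forall n x y, U n x -> U n y -> dist x y <= d n) /\
      (forall N, sum_f_R0 d N <= M).

(* The curve is the graph over [0, 1] of the Takagi-type function
   [f x = sum_n c_n 2^-n T (2^n x)], where [T] is the distance to the nearest
   integer and [c_n = 2^(-J/2) / (J + 1)] on the block [2^J - 1 <= n < 2^(J+1) - 1].
   On a dyadic cell of level [m] the partial sum of order [m] is affine, and the
   slopes on its two halves are [D +- c_m]; so the mean square slope at level [m]
   is [sum_(n < m) c_n^2], which is bounded, and this bounds the length of the
   graph.  On the other hand the peak of height [c_m 2^-(m+1)] added at level [m]
   keeps the graph away from every line: a ball of the multiresolution family of
   radius comparable to [2^-m], centred near a dyadic point of small slope, has
   [beta] comparable to [c_m], and at least a quarter of the dyadic points have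
   small slope.  Level [m] thus contributes about [c_m^r] to [S], and
   [sum_J 2^J (2^(-J/2) / (J + 1))^r] diverges for [r < 2]. *)

From Pilot Require Import Defs.
From Stdlib Require Import Reals Lra Lia List ClassicalEpsilon.
From Coquelicot Require Import Coquelicot.
Open Scope R_scope.

(** * Distance to the nearest integer *)

Definition nearest_int (y : R) : Z := (up (y + /2) - 1)%Z.

Definition tent (y : R) : R := Rabs (y - IZR (nearest_int y)).

Lemma tent_le_half y : tent y <= /2.
Proof.
  unfold tent, nearest_int. destruct (archimed (y + /2)) as [H1 H2].
  rewrite minus_IZR. apply Rabs_le. simpl. lra.
Qed.

Lemma tent_nonneg y : 0 <= tent y.
Proof. apply Rabs_pos. Qed.

Lemma tent_le_dist_int y (n : Z) : tent y <= Rabs (y - IZR n).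
Proof.
  pose proof (tent_le_half y) as H. unfold tent in *. apply Rabs_le_between in H.
  destruct (Z.lt_total n (nearest_int y)) as [Hn|[->|Hn]]; [|lra|].
  - apply Z.lt_le_pred, IZR_le in Hn. rewrite <- Z.sub_1_r, minus_IZR in Hn.
    rewrite (Rabs_right (y - IZR n)); [|simpl in Hn; lra].
    apply Rabs_le. simpl in Hn. lra.
  - apply Z.le_succ_l, IZR_le in Hn. rewrite <- Z.add_1_r, plus_IZR in Hn.
    rewrite (Rabs_left1 (y - IZR n)); [|lra]. apply Rabs_le. lra.
Qed.

Lemma tent_lipschitz y z : Rabs (tent y - tent z) <= Rabs (y - z).
Proof.
  assert (Htri : forall a b, tent a <= Rabs (a - b) + tent b).
  { intros a b. eapply Rle_trans; [apply (tent_le_dist_int a (nearest_int b))|].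
    replace (a - IZR (nearest_int b)) with ((a - b) + (b - IZR (nearest_int b))) by ring.
    apply Rabs_triang. }
  pose proof (Htri y z). pose proof (Htri z y). rewrite Rabs_minus_sym in H0.
  apply Rabs_le. lra.
Qed.

Lemma tent_IZR (n : Z) : tent (IZR n) = 0.
Proof.
  apply Rle_antisym; [|apply tent_nonneg].
  rewrite <- Rabs_R0. replace 0 with (IZR n - IZR n) by ring. apply tent_le_dist_int.
Qed.

Lemma tent_ge_min y (q : Z) : IZR q <= y <= IZR q + 1 ->
  Rmin (y - IZR q) (IZR q + 1 - y) <= tent y.
Proof.
  intros Hy. unfold tent.
  destruct (Z.le_gt_cases (nearest_int y) q) as [Hz|Hz].
  - apply IZR_le in Hz. rewrite Rabs_right by lra.
    apply Rle_trans with (y - IZR q); [apply Rmin_l|lra].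
  - apply Z.le_succ_l, IZR_le in Hz. rewrite <- Z.add_1_r, plus_IZR in Hz.
    rewrite Rabs_left1 by lra.
    apply Rle_trans with (IZR q + 1 - y); [apply Rmin_r|lra].
Qed.

Lemma tent_left (q : Z) y : IZR q <= y <= IZR q + /2 -> tent y = y - IZR q.
Proof.
  intros H. apply Rle_antisym.
  - pose proof (tent_le_dist_int y q). rewrite Rabs_right in H0 by lra. lra.
  - pose proof (tent_ge_min y q ltac:(lra)). unfold Rmin in H0.
    destruct (Rle_dec _ _); lra.
Qed.

Lemma tent_right (q : Z) y : IZR q + /2 <= y <= IZR q + 1 -> tent y = IZR q + 1 - y.
Proof.
  intros H. apply Rle_antisym.
  - pose proof (tent_le_dist_int y (q + 1)). rewrite plus_IZR in H0.
    rewrite Rabs_left1 in H0 by lra. lra.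
  - pose proof (tent_ge_min y q ltac:(lra)). unfold Rmin in H0.
    destruct (Rle_dec _ _); lra.
Qed.

Lemma tent_affine_on_half_cell (k : nat) : exists s, forall y z,
  INR k / 2 <= y <= (INR k + 1) / 2 -> INR k / 2 <= z <= (INR k + 1) / 2 ->
  tent y - tent z = s * (y - z).
Proof.
  destruct (Nat.Even_or_Odd k) as [[q ->]|[q ->]].
  - exists 1. intros y z Hy Hz. rewrite mult_INR in Hy, Hz.
    rewrite (tent_left (Z.of_nat q) y), (tent_left (Z.of_nat q) z);
      rewrite <- ?INR_IZR_INZ; simpl in *; lra.
  - exists (-1). intros y z Hy Hz. rewrite plus_INR, mult_INR in Hy, Hz.
    rewrite (tent_right (Z.of_nat q) y), (tent_right (Z.of_nat q) z);
      rewrite <- ?INR_IZR_INZ; simpl in *; lra.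
Qed.

(** * Square-summable coefficients *)

Definition block_coef (J : nat) : R := / (sqrt 2 ^ J * (INR J + 1)).

(* The coefficient is constant on the blocks [2^J - 1, 2^(J+1) - 1). *)
Definition coef (n : nat) : R := block_coef (Nat.log2 (S n)).

Lemma pow2_pos n : 0 < 2 ^ n.
Proof. apply pow_lt. lra. Qed.

Lemma INR_pow2 k : INR (2 ^ k) = 2 ^ k.
Proof. rewrite pow_INR. simpl. f_equal. Qed.

Lemma pow2_ge_succ t : INR t + 1 <= 2 ^ t.
Proof.
  induction t; [simpl; lra|]. rewrite S_INR. simpl. pose proof (pos_INR t). lra.
Qed.

Lemma nat_above y : exists t : nat, y <= INR t.
Proof.
  destruct (archimed y) as [H1 _]. exists (Z.to_nat (up y)).
  destruct (Z.le_gt_cases 0 (up y)) as [Hz|Hz].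
  - rewrite INR_IZR_INZ, Znat.Z2Nat.id by exact Hz. lra.
  - apply IZR_lt in Hz. pose proof (pos_INR (Z.to_nat (up y))). lra.
Qed.

Lemma block_coef_pos J : 0 < block_coef J.
Proof.
  unfold block_coef. apply Rinv_0_lt_compat, Rmult_lt_0_compat.
  - apply pow_lt, sqrt_lt_R0. lra.
  - pose proof (pos_INR J). lra.
Qed.

Lemma block_coef_le_1 J : block_coef J <= 1.
Proof.
  unfold block_coef. rewrite <- Rinv_1. apply Rinv_le_contravar; [lra|].
  assert (1 <= sqrt 2) by (rewrite <- sqrt_1; apply sqrt_le_1_alt; lra).
  pose proof (pos_INR J). pose proof (pow_R1_Rle (sqrt 2) J H). nra.
Qed.

Lemma block_coef_sq J : block_coef J * block_coef J = / (2 ^ J * ((INR J + 1) * (INR J + 1))).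
Proof.
  unfold block_coef. rewrite <- Rinv_mult. f_equal.
  replace (2 ^ J) with (sqrt 2 ^ J * sqrt 2 ^ J); [ring|].
  rewrite <- Rpow_mult_distr, sqrt_sqrt by lra. reflexivity.
Qed.

Lemma coef_pos n : 0 < coef n.
Proof. apply block_coef_pos. Qed.

Lemma coef_le_1 n : coef n <= 1.
Proof. apply block_coef_le_1. Qed.

Lemma coef_on_block J t : (t < 2 ^ J)%nat -> coef (2 ^ J - 1 + t) = block_coef J.
Proof.
  intros Ht. unfold coef. pose proof (Nat.pow_nonzero 2 J ltac:(lia)).
  rewrite (Nat.log2_unique (S (2 ^ J - 1 + t)) J); [reflexivity|lia|simpl; lia].
Qed.

Fixpoint psum (a : nat -> R) (N : nat) : R :=
  match N with O => 0 | S N' => psum a N' + a N' end.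

Lemma psum_ext (a b : nat -> R) K : (forall i, (i < K)%nat -> a i = b i) -> psum a K = psum b K.
Proof.
  induction K; intros H; simpl; [reflexivity|].
  rewrite IHK by (intros; apply H; lia). rewrite H by lia. reflexivity.
Qed.

Lemma psum_plus (a b : nat -> R) K : psum (fun i => a i + b i) K = psum a K + psum b K.
Proof. induction K; simpl; [ring|]. rewrite IHK. ring. Qed.

Lemma psum_scal (a : nat -> R) l K : psum (fun i => l * a i) K = l * psum a K.
Proof. induction K; simpl; [ring|]. rewrite IHK. ring. Qed.

Lemma psum_const l K : psum (fun _ => l) K = INR K * l.
Proof. induction K; simpl psum; [simpl; ring|]. rewrite IHK, S_INR. ring. Qed.

Lemma psum_le (a b : nat -> R) K : (forall i, (i < K)%nat -> a i <= b i) -> psum a K <= psum b K.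
Proof.
  induction K; intros H; simpl; [lra|].
  pose proof (H K ltac:(lia)). pose proof (IHK ltac:(intros; apply H; lia)). lra.
Qed.

Lemma psum_app (a : nat -> R) K L : psum a (K + L) = psum a K + psum (fun t => a (K + t)%nat) L.
Proof.
  induction L; [rewrite Nat.add_0_r; simpl; ring|].
  rewrite Nat.add_succ_r. cbn [psum]. rewrite IHL. ring.
Qed.

Lemma psum_nonneg (a : nat -> R) K : (forall i, 0 <= a i) -> 0 <= psum a K.
Proof. intros H. induction K; simpl; [lra|]. pose proof (H K). lra. Qed.

Lemma psum_mono (a : nat -> R) K L : (forall i, 0 <= a i) -> (K <= L)%nat -> psum a K <= psum a L.
Proof.
  intros H HKL. replace L with (K + (L - K))%nat by lia. rewrite psum_app.
  pose proof (psum_nonneg (fun t => a (K + t)%nat) (L - K) ltac:(intros; apply H)). lra.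
Qed.

Lemma psum_pairs (a : nat -> R) K :
  psum a (2 * K) = psum (fun i => a (2 * i)%nat + a (2 * i + 1)%nat) K.
Proof.
  induction K; [reflexivity|].
  replace (2 * S K)%nat with (S (S (2 * K))) by lia. cbn [psum]. rewrite IHK.
  replace (S (2 * K)) with (2 * K + 1)%nat by lia. ring.
Qed.

Lemma psum_coef_sq_pow2 J : psum (fun n => coef n * coef n) (2 ^ J - 1) <= 3 - 2 / (INR J + 1).
Proof.
  induction J; [simpl; lra|].
  pose proof (Nat.pow_nonzero 2 J ltac:(lia)).
  replace (2 ^ S J - 1)%nat with ((2 ^ J - 1) + 2 ^ J)%nat by (simpl; lia).
  rewrite psum_app, (psum_ext (fun t => coef (2 ^ J - 1 + t) * coef (2 ^ J - 1 + t))
    (fun _ => block_coef J * block_coef J))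
    by (intros t Ht; cbv beta; rewrite coef_on_block by exact Ht; reflexivity).
  rewrite psum_const, INR_pow2, block_coef_sq, S_INR.
  set (x := INR J + 1) in *. assert (1 <= x) by (unfold x; pose proof (pos_INR J); lra).
  pose proof (pow2_pos J).
  (* telescoping: 1 / x^2 <= 2 / x - 2 / (x + 1) *)
  assert (E : 2 / x - 2 / (x + 1) - 2 ^ J * / (2 ^ J * (x * x)) = (x - 1) / (x * x * (x + 1)))
    by (field; lra).
  assert (0 <= (x - 1) / (x * x * (x + 1))).
  { apply Rmult_le_pos; [lra|]. apply Rlt_le, Rinv_0_lt_compat. nra. }
  lra.
Qed.

Lemma psum_coef_sq_le N : psum (fun n => coef n * coef n) N <= 3.
Proof.
  apply Rle_trans with (psum (fun n => coef n * coef n) (2 ^ N - 1)).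
  - apply psum_mono; [intros n; pose proof (coef_pos n); nra|].
    pose proof (Nat.pow_gt_lin_r 2 N). lia.
  - pose proof (psum_coef_sq_pow2 N). pose proof (pos_INR N).
    assert (0 < 2 / (INR N + 1)) by (apply Rdiv_lt_0_compat; lra). lra.
Qed.

(** * The Takagi-type function and its dyadic slopes *)

Definition takagi_term (n : nat) (x : R) : R := coef n / 2 ^ n * tent (2 ^ n * x).

Definition takagi_partial (N : nat) (x : R) : R := psum (fun n => takagi_term n x) N.

Definition takagi (x : R) : R := Series (fun n => takagi_term n x).

Definition takagi_tail (N : nat) (x : R) : R := Series (fun k => takagi_term (N + k) x).

Definition dyadic (m i : nat) : R := INR i / 2 ^ m.

Lemma Series_zero : Series (fun _ : nat => 0) = 0.
Proof.
  rewrite (Series_ext _ (fun _ : nat => 0 * 0)) by (intros; ring).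
  rewrite Series_scal_l. ring.
Qed.

Lemma takagi_term_bounds n x : 0 <= takagi_term n x <= (/2) ^ n * /2.
Proof.
  unfold takagi_term, Rdiv. pose proof (coef_pos n). pose proof (coef_le_1 n).
  pose proof (tent_nonneg (2 ^ n * x)). pose proof (tent_le_half (2 ^ n * x)).
  rewrite <- pow_inv. pose proof (pow_lt (/2) n ltac:(lra)).
  split; [apply Rmult_le_pos; [apply Rmult_le_pos|]; lra|].
  apply Rmult_le_compat; [apply Rmult_le_pos; lra|lra| |lra].
  rewrite <- (Rmult_1_l ((/2) ^ n)) at 2. apply Rmult_le_compat_r; lra.
Qed.

Lemma ex_series_takagi_term x : ex_series (fun n => takagi_term n x).
Proof.
  apply (@ex_series_le R_AbsRing R_CompleteNormedModule _ (fun n => (/2) ^ n * /2)).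
  - intros n. change (norm (takagi_term n x)) with (Rabs (takagi_term n x)).
    pose proof (takagi_term_bounds n x). rewrite Rabs_right; lra.
  - apply ex_series_scal_r, ex_series_geom. rewrite Rabs_right; lra.
Qed.

Lemma takagi_split N x : takagi x = takagi_partial N x + takagi_tail N x.
Proof.
  induction N; [unfold takagi_partial, takagi_tail, takagi; simpl; ring|].
  rewrite IHN. unfold takagi_partial, takagi_tail. simpl. rewrite Series_incr_1.
  - rewrite Nat.add_0_r, Rplus_assoc. do 2 f_equal.
    apply Series_ext. intros k. f_equal. lia.
  - apply (ex_series_incr_n (fun n => takagi_term n x)), ex_series_takagi_term.
Qed.

Lemma takagi_tail_bounds N x : 0 <= takagi_tail N x <= / 2 ^ N.
Proof.
  assert (Hex : ex_series (fun k => takagi_term (N + k) x))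
    by apply (ex_series_incr_n (fun n => takagi_term n x)), ex_series_takagi_term.
  unfold takagi_tail. split.
  - rewrite <- Series_zero.
    apply Series_le; [|exact Hex]. intros n. pose proof (takagi_term_bounds (N + n) x). lra.
  - apply Rle_trans with (Series (fun k => (/2) ^ k * ((/2) ^ N * /2))).
    + apply Series_le.
      * intros n. pose proof (takagi_term_bounds (N + n) x). rewrite pow_add in H. lra.
      * apply ex_series_scal_r, ex_series_geom. rewrite Rabs_right; lra.
    + rewrite Series_scal_r, Series_geom by (rewrite Rabs_right; lra).
      rewrite <- pow_inv. apply Req_le. field.
Qed.

Lemma takagi_tail_dyadic N i : takagi_tail N (dyadic N i) = 0.
Proof.
  unfold takagi_tail. rewrite <- Series_zero.
  apply Series_ext. intros k. unfold takagi_term, dyadic.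
  replace (2 ^ (N + k) * (INR i / 2 ^ N)) with (IZR (Z.of_nat (2 ^ k * i))).
  - rewrite tent_IZR. ring.
  - rewrite <- INR_IZR_INZ, mult_INR, INR_pow2, pow_add. field.
    apply pow_nonzero. lra.
Qed.

Lemma takagi_dyadic m i : takagi (dyadic m i) = takagi_partial m (dyadic m i).
Proof. rewrite (takagi_split m), takagi_tail_dyadic. apply Rplus_0_r. Qed.

Lemma dyadic_succ m i : dyadic m (i + 1) = dyadic m i + / 2 ^ m.
Proof. unfold dyadic. rewrite plus_INR. simpl. field. apply pow_nonzero. lra. Qed.

Lemma dyadic_double m i : dyadic (S m) (2 * i) = dyadic m i.
Proof. unfold dyadic. rewrite mult_INR. simpl. field. apply pow_nonzero. lra. Qed.

Lemma dyadic_odd m i : dyadic (S m) (2 * i + 1) = dyadic m i + / 2 ^ S m.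
Proof. unfold dyadic. rewrite plus_INR, mult_INR. simpl. field. apply pow_nonzero. lra. Qed.

Lemma dyadic_shift m e u : dyadic (m + e) (2 ^ e * u) = dyadic m u.
Proof.
  unfold dyadic. rewrite mult_INR, INR_pow2, pow_add. field.
  split; apply pow_nonzero; lra.
Qed.

Lemma dyadic_in_01 m i : (i <= 2 ^ m)%nat -> 0 <= dyadic m i <= 1.
Proof.
  intros H. apply le_INR in H. rewrite INR_pow2 in H. unfold dyadic.
  pose proof (pow2_pos m) as Hp. pose proof (pos_INR i). split.
  - apply Rdiv_le_0_compat; lra.
  - apply (Rdiv_le_1 _ _ Hp); exact H.
Qed.

Lemma dyadic_cell_iff N i x :
  dyadic N i <= x <= dyadic N (i + 1) <-> INR i <= 2 ^ N * x <= INR i + 1.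
Proof.
  unfold dyadic. rewrite plus_INR. simpl. pose proof (pow2_pos N).
  rewrite (Rle_div_l (INR i)), <- (Rle_div_r x) by lra. lra.
Qed.

Lemma takagi_term_affine_on_cell n N i : (n < N)%nat -> exists s, forall x y,
  dyadic N i <= x <= dyadic N (i + 1) -> dyadic N i <= y <= dyadic N (i + 1) ->
  takagi_term n x - takagi_term n y = s * (x - y).
Proof.
  intros Hn. set (d := (2 ^ (N - n - 1))%nat).
  assert (Hd : (0 < d)%nat) by (apply Nat.neq_0_lt_0, Nat.pow_nonzero; lia).
  assert (HN : 2 ^ N = 2 ^ n * (2 * INR d)).
  { unfold d. rewrite INR_pow2. change (2 * 2 ^ (N - n - 1)) with (2 ^ S (N - n - 1)).
    rewrite <- pow_add. f_equal. lia. }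
  set (k := (i / d)%nat).
  assert (Hk : INR k * INR d <= INR i /\ INR i + 1 <= (INR k + 1) * INR d).
  { pose proof (Nat.div_mod i d ltac:(lia)). pose proof (Nat.mod_upper_bound i d ltac:(lia)).
    assert (k * d <= i /\ i + 1 <= (k + 1) * d)%nat as [H1 H2] by nia.
    apply le_INR in H1, H2. rewrite !mult_INR, !plus_INR in *. simpl in *. lra. }
  assert (Hcell : forall x, dyadic N i <= x <= dyadic N (i + 1) ->
            INR k / 2 <= 2 ^ n * x <= (INR k + 1) / 2).
  { intros x Hx. apply dyadic_cell_iff in Hx. rewrite HN in Hx.
    pose proof (pow2_pos n). pose proof (lt_0_INR d ltac:(lia)).
    split; apply Rmult_le_reg_r with (2 * INR d); nra. }
  destruct (tent_affine_on_half_cell k) as [s Hs].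
  exists (coef n * s). intros x y Hx Hy. unfold takagi_term.
  replace (coef n / 2 ^ n * tent (2 ^ n * x) - coef n / 2 ^ n * tent (2 ^ n * y))
    with (coef n / 2 ^ n * (tent (2 ^ n * x) - tent (2 ^ n * y))) by ring.
  rewrite (Hs _ _ (Hcell x Hx) (Hcell y Hy)). field. apply pow_nonzero. lra.
Qed.

Lemma takagi_partial_affine_on_cell N i : exists s, forall x y,
  dyadic N i <= x <= dyadic N (i + 1) -> dyadic N i <= y <= dyadic N (i + 1) ->
  takagi_partial N x - takagi_partial N y = s * (x - y).
Proof.
  assert (H : forall M, (M <= N)%nat -> exists s, forall x y,
    dyadic N i <= x <= dyadic N (i + 1) -> dyadic N i <= y <= dyadic N (i + 1) ->
    takagi_partial M x - takagi_partial M y = s * (x - y)).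
  { induction M; intros HM; [exists 0; intros; unfold takagi_partial; simpl; ring|].
    destruct (IHM ltac:(lia)) as [s1 H1].
    destruct (takagi_term_affine_on_cell M N i ltac:(lia)) as [s2 H2].
    exists (s1 + s2). intros x y Hx Hy. unfold takagi_partial in *. simpl.
    specialize (H1 x y Hx Hy). specialize (H2 x y Hx Hy). lra. }
  apply H, le_n.
Qed.

Lemma takagi_midpoint m i :
  takagi (dyadic (S m) (2 * i + 1))
  = (takagi (dyadic m i) + takagi (dyadic m (i + 1))) / 2 + coef m / 2 ^ S m.
Proof.
  set (a := dyadic m i). set (b := dyadic m (i + 1)). set (mid := dyadic (S m) (2 * i + 1)).
  pose proof (pow2_pos m) as Hp.
  assert (Hmid : mid = a + / 2 ^ m / 2) by (unfold mid, a; rewrite dyadic_odd; simpl; field; lra).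
  assert (Hb : b = a + / 2 ^ m) by apply dyadic_succ.
  pose proof (Rinv_0_lt_compat _ Hp).
  destruct (takagi_partial_affine_on_cell m i) as [s Hs]. fold a b in Hs.
  assert (Ha' : a <= a <= b) by lra. assert (Hb' : a <= b <= b) by lra.
  assert (Hm' : a <= mid <= b) by lra.
  pose proof (Hs mid a Hm' Ha') as E1. pose proof (Hs b a Hb' Ha') as E2.
  (* at level m the midpoint sits on a peak of the tent *)
  assert (Hpeak : takagi_term m mid = coef m / 2 ^ m * / 2).
  { assert (Hscaled : 2 ^ m * mid = IZR (Z.of_nat i) + / 2).
    { rewrite Hmid, <- INR_IZR_INZ. unfold a, dyadic. field. lra. }
    unfold takagi_term. rewrite Hscaled, (tent_left (Z.of_nat i)) by lra. field. lra. }
  unfold mid, a, b. rewrite !takagi_dyadic. fold a b mid.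
  change (takagi_partial (S m) mid) with (takagi_partial m mid + takagi_term m mid).
  replace (coef m / 2 ^ S m) with (coef m / 2 ^ m * / 2) by (simpl; field; lra).
  replace (mid - a) with (/ 2 ^ m / 2) in E1 by (rewrite Hmid; ring).
  replace (b - a) with (/ 2 ^ m) in E2 by (rewrite Hb; ring).
  rewrite Hpeak. lra.
Qed.

Definition slope (m i : nat) : R := 2 ^ m * (takagi (dyadic m (i + 1)) - takagi (dyadic m i)).

Lemma slope_even m i : slope (S m) (2 * i) = slope m i + coef m.
Proof.
  unfold slope. rewrite takagi_midpoint, dyadic_double. simpl. field.
  apply pow_nonzero. lra.
Qed.

Lemma slope_odd m i : slope (S m) (2 * i + 1) = slope m i - coef m.
Proof.
  unfold slope. replace (2 * i + 1 + 1)%nat with (2 * (i + 1))%nat by lia.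
  rewrite takagi_midpoint, dyadic_double. simpl. field. apply pow_nonzero. lra.
Qed.

Lemma slope_0 i : slope 0 i = 0.
Proof.
  unfold slope. rewrite !takagi_dyadic. unfold takagi_partial. simpl. ring.
Qed.

Lemma Rabs_add_sub_coef_le a b m : Rabs a <= b -> Rabs (a + coef m) <= b + 1 /\ Rabs (a - coef m) <= b + 1.
Proof.
  intros H. pose proof (coef_pos m). pose proof (coef_le_1 m).
  apply Rabs_le_between in H. split; apply Rabs_le; lra.
Qed.

Lemma slope_bound m i : Rabs (slope m i) <= INR m.
Proof.
  revert i. induction m; intros i; [rewrite slope_0, Rabs_R0; simpl; lra|].
  rewrite S_INR. destruct (Nat.Even_or_Odd i) as [[k ->]|[k ->]].
  - rewrite slope_even. apply Rabs_add_sub_coef_le, IHm.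
  - rewrite slope_odd. apply Rabs_add_sub_coef_le, IHm.
Qed.

Lemma slope_shift m u e : Rabs (slope (e + m) (2 ^ e * u) - slope m u) <= INR e.
Proof.
  induction e; [simpl; rewrite Nat.add_0_r, Rminus_diag, Rabs_R0; lra|].
  rewrite S_INR. replace (2 ^ S e * u)%nat with (2 * (2 ^ e * u))%nat by (simpl; lia).
  cbn [Nat.add]. rewrite slope_even.
  replace (slope (e + m) (2 ^ e * u) + coef (e + m) - slope m u)
    with (slope (e + m) (2 ^ e * u) - slope m u + coef (e + m)) by ring.
  apply Rabs_add_sub_coef_le, IHe.
Qed.

Lemma sum_slope_sq m :
  psum (fun i => slope m i * slope m i) (2 ^ m) = 2 ^ m * psum (fun n => coef n * coef n) m.
Proof.
  induction m; [simpl; rewrite slope_0; ring|].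
  replace (2 ^ S m)%nat with (2 * 2 ^ m)%nat by (simpl; lia).
  rewrite psum_pairs, (psum_ext _ (fun i => 2 * (slope m i * slope m i) + 2 * (coef m * coef m)))
    by (intros i _; rewrite slope_even, slope_odd; ring).
  rewrite psum_plus, psum_scal, psum_const, IHm, INR_pow2. simpl. ring.
Qed.

(** * Continuity and finite length of the graph *)

Definition graph (t : R) : pt := (t, takagi t).

Lemma dist_le_abs_sum (p q : pt) : Defs.dist p q <= Rabs (fst p - fst q) + Rabs (snd p - snd q).
Proof.
  pose proof (Rabs_pos (fst p - fst q)). pose proof (Rabs_pos (snd p - snd q)).
  unfold Defs.dist. rewrite <- (sqrt_square (Rabs (fst p - fst q) + Rabs (snd p - snd q))) by lra.
  apply sqrt_le_1_alt. rewrite <- !Rsqr_pow2, (Rsqr_abs (fst p - fst q)), (Rsqr_abs (snd p - snd q)).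
  unfold Rsqr. nra.
Qed.

Lemma exists_pow2_small (delta : R) : delta > 0 -> exists N, (INR N + 2) / 2 ^ N <= delta.
Proof.
  intros Hd. destruct (nat_above (2 / delta)) as [t Ht].
  exists (t + t)%nat. rewrite pow_add, plus_INR.
  pose proof (pow2_ge_succ t). pose proof (pos_INR t).
  assert (2 <= delta * INR t) by (apply Rle_div_l in Ht; lra).
  apply Rle_div_l; nra.
Qed.

Lemma takagi_partial_lipschitz N s t :
  Rabs (takagi_partial N s - takagi_partial N t) <= INR N * Rabs (s - t).
Proof.
  induction N; [unfold takagi_partial; simpl; rewrite Rminus_0_r, Rabs_R0; lra|].
  unfold takagi_partial in *. cbn [psum]. rewrite S_INR.
  assert (Rabs (takagi_term N s - takagi_term N t) <= Rabs (s - t)).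
  { unfold takagi_term. pose proof (pow2_pos N). pose proof (coef_pos N). pose proof (coef_le_1 N).
    rewrite <- Rmult_minus_distr_l, Rabs_mult, Rabs_right by (apply Rle_ge, Rdiv_le_0_compat; lra).
    pose proof (tent_lipschitz (2 ^ N * s) (2 ^ N * t)) as Hl.
    rewrite <- Rmult_minus_distr_l, Rabs_mult, (Rabs_right (2 ^ N)) in Hl by lra.
    apply Rle_trans with (coef N / 2 ^ N * (2 ^ N * Rabs (s - t))).
    - apply Rmult_le_compat_l; [apply Rdiv_le_0_compat|]; lra.
    - replace (coef N / 2 ^ N * (2 ^ N * Rabs (s - t))) with (coef N * Rabs (s - t)) by (field; lra).
      pose proof (Rabs_pos (s - t)). nra. }
  replace (psum (fun n => takagi_term n s) N + takagi_term N s
           - (psum (fun n => takagi_term n t) N + takagi_term N t))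
    with ((psum (fun n => takagi_term n s) N - psum (fun n => takagi_term n t) N)
          + (takagi_term N s - takagi_term N t)) by ring.
  eapply Rle_trans; [apply Rabs_triang|]. lra.
Qed.

Lemma graph_continuous : continuous_on_01 graph.
Proof.
  intros t _ eps Heps.
  destruct (exists_pow2_small (eps / 2) ltac:(lra)) as [N HN].
  pose proof (pos_INR N). pose proof (pow2_pos N).
  assert (Hinv : / 2 ^ N <= eps / 2).
  { eapply Rle_trans; [|exact HN]. unfold Rdiv. rewrite <- (Rmult_1_l (/ 2 ^ N)) at 1.
    apply Rmult_le_compat_r; [apply Rlt_le, Rinv_0_lt_compat|]; lra. }
  exists (eps / (2 * (INR N + 1))). split; [apply Rdiv_lt_0_compat; lra|].
  intros s _ Hst. eapply Rle_lt_trans; [apply dist_le_abs_sum|]. unfold graph; simpl.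
  rewrite (takagi_split N s), (takagi_split N t).
  pose proof (takagi_tail_bounds N s). pose proof (takagi_tail_bounds N t).
  pose proof (takagi_partial_lipschitz N s t).
  assert (Rabs (takagi_tail N s - takagi_tail N t) <= / 2 ^ N) by (apply Rabs_le; lra).
  assert ((INR N + 1) * Rabs (s - t) < eps / 2).
  { apply Rlt_div_r in Hst; lra. }
  pose proof (Rabs_triang (takagi_partial N s - takagi_partial N t) (takagi_tail N s - takagi_tail N t)).
  replace (takagi_partial N s + takagi_tail N s - (takagi_partial N t + takagi_tail N t))
    with (takagi_partial N s - takagi_partial N t + (takagi_tail N s - takagi_tail N t)) by ring.
  nra.
Qed.

Lemma takagi_oscillation_on_cell N i x y :
  dyadic N i <= x <= dyadic N (i + 1) -> dyadic N i <= y <= dyadic N (i + 1) ->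
  Rabs (takagi x - takagi y) <= (Rabs (slope N i) + 1) / 2 ^ N.
Proof.
  intros Hx Hy. destruct (takagi_partial_affine_on_cell N i) as [s Hs].
  pose proof (pow2_pos N) as Hp. pose proof (dyadic_succ N i) as Hstep.
  pose proof (Rinv_0_lt_compat _ Hp).
  assert (Hslope : slope N i = s).
  { unfold slope. rewrite !takagi_dyadic, (Hs (dyadic N (i + 1)) (dyadic N i) ltac:(lra) ltac:(lra)), Hstep.
    field. lra. }
  rewrite (takagi_split N x), (takagi_split N y), Hslope.
  replace (takagi_partial N x + takagi_tail N x - (takagi_partial N y + takagi_tail N y))
    with (s * (x - y) + (takagi_tail N x - takagi_tail N y)) by (rewrite <- (Hs x y Hx Hy); ring).
  pose proof (takagi_tail_bounds N x). pose proof (takagi_tail_bounds N y).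
  assert (Rabs (x - y) <= / 2 ^ N) by (apply Rabs_le; lra).
  assert (Rabs (takagi_tail N x - takagi_tail N y) <= / 2 ^ N) by (apply Rabs_le; lra).
  eapply Rle_trans; [apply Rabs_triang|]. rewrite Rabs_mult.
  pose proof (Rabs_pos s). unfold Rdiv. rewrite Rmult_plus_distr_r, Rmult_1_l.
  apply Rplus_le_compat; [apply Rmult_le_compat_l|]; lra.
Qed.

Lemma graph_dist_on_cell N i x y :
  dyadic N i <= x <= dyadic N (i + 1) -> dyadic N i <= y <= dyadic N (i + 1) ->
  Defs.dist (graph x) (graph y) <= (Rabs (slope N i) + 2) / 2 ^ N.
Proof.
  intros Hx Hy. eapply Rle_trans; [apply dist_le_abs_sum|]. unfold graph; simpl.
  pose proof (takagi_oscillation_on_cell N i x y Hx Hy). rewrite dyadic_succ in Hx, Hy.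
  assert (Rabs (x - y) <= / 2 ^ N) by (apply Rabs_le; lra).
  unfold Rdiv in *. lra.
Qed.

Lemma exists_unit_cell K y : (1 <= K)%nat -> 0 <= y <= INR K ->
  exists i, (i < K)%nat /\ INR i <= y <= INR i + 1.
Proof.
  induction K as [|K IHK]; intros HK Hy; [lia|].
  destruct (Nat.eq_dec K 0) as [->|HK0]; [exists 0%nat; simpl in *; split; [lia|lra]|].
  destruct (Rle_dec y (INR K)) as [Hle|Hgt].
  - destruct (IHK ltac:(lia) ltac:(lra)) as [i [Hi1 Hi2]]. exists i. split; [lia|lra].
  - exists K. rewrite S_INR in Hy. split; [lia|lra].
Qed.

Lemma exists_dyadic_cell N t : 0 <= t <= 1 ->
  exists i, (i < 2 ^ N)%nat /\ dyadic N i <= t <= dyadic N (i + 1).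
Proof.
  intros Ht. pose proof (pow2_pos N).
  destruct (exists_unit_cell (2 ^ N) (2 ^ N * t)) as [i [Hi Hcell]].
  - pose proof (Nat.pow_nonzero 2 N). lia.
  - rewrite INR_pow2. nra.
  - exists i. split; [exact Hi|]. apply dyadic_cell_iff, Hcell.
Qed.

(* [|D| + 2 <= 5/2 + D^2/2] and the mean of [D^2] is at most [sum c_n^2 <= 3]. *)
Lemma psum_cell_bound_le N : psum (fun i => (Rabs (slope N i) + 2) / 2 ^ N) (2 ^ N) <= 4.
Proof.
  pose proof (pow2_pos N).
  apply Rle_trans with (psum (fun i => / 2 ^ N * (5 / 2) + / 2 ^ N * / 2 * (slope N i * slope N i)) (2 ^ N)).
  - apply psum_le. intros i _. set (D := slope N i).
    assert (Rabs D * Rabs D = D * D)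
      by (rewrite <- Rabs_mult; apply Rabs_right, Rle_ge, Rle_0_sqr).
    pose proof (Rabs_pos D). pose proof (Rinv_0_lt_compat _ H).
    assert (Rabs D + 2 <= 5 / 2 + D * D / 2)
      by (pose proof (Rle_0_sqr (Rabs D - 1)); unfold Rsqr in *; nra).
    unfold Rdiv. nra.
  - rewrite psum_plus, psum_const, psum_scal, sum_slope_sq, INR_pow2.
    pose proof (psum_coef_sq_le N).
    replace (2 ^ N * (/ 2 ^ N * (5 / 2)) + / 2 ^ N * / 2 * (2 ^ N * psum (fun n => coef n * coef n) N))
      with (5 / 2 + psum (fun n => coef n * coef n) N / 2) by (field; lra).
    lra.
Qed.

Lemma sum_f_R0_psum (a : nat -> R) M : sum_f_R0 a M = psum a (S M).
Proof. induction M; simpl; [ring|]. rewrite IHM. reflexivity. Qed.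

Lemma psum_le_of_support (a : nat -> R) K L :
  (forall i, 0 <= a i) -> (forall i, (K <= i)%nat -> a i = 0) -> psum a L <= psum a K.
Proof.
  intros Hnn Hsupp. apply Rle_trans with (psum a (K + L)); [apply psum_mono; [exact Hnn|lia]|].
  rewrite psum_app, (psum_ext (fun t => a (K + t)%nat) (fun _ => 0) L) by (intros t _; apply Hsupp; lia).
  rewrite psum_const. lra.
Qed.

Theorem graph_H1_finite : H1_finite (image01 graph).
Proof.
  exists 4. intros delta Hdelta.
  destruct (exists_pow2_small delta Hdelta) as [N HN].
  pose proof (pow2_pos N) as Hp.
  set (bound_on_cell := fun i => (Rabs (slope N i) + 2) / 2 ^ N).
  set (d := fun i => if Nat.ltb i (2 ^ N) then bound_on_cell i else 0).
  assert (Hd : forall i, 0 <= d i <= delta).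
  { intros i. unfold d, bound_on_cell. destruct (Nat.ltb i (2 ^ N)); [|lra].
    pose proof (Rabs_pos (slope N i)). pose proof (slope_bound N i). split.
    - apply Rdiv_le_0_compat; lra.
    - eapply Rle_trans; [|exact HN]. apply Rmult_le_compat_r; [apply Rlt_le, Rinv_0_lt_compat|]; lra. }
  exists (fun i z => (i < 2 ^ N)%nat /\ exists x, dyadic N i <= x <= dyadic N (i + 1) /\ z = graph x), d.
  split; [|split; [exact Hd|split]].
  - intros z [t [Ht ->]]. destruct (exists_dyadic_cell N t Ht) as [i [Hi Hcell]].
    exists i. split; [exact Hi|]. exists t. split; [exact Hcell|reflexivity].
  - intros i x y [Hi [x1 [Hx1 ->]]] [_ [y1 [Hy1 ->]]].
    unfold d. apply Nat.ltb_lt in Hi. rewrite Hi. apply graph_dist_on_cell; assumption.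
  - intros M. rewrite sum_f_R0_psum.
    eapply Rle_trans; [apply (psum_le_of_support d (2 ^ N)); [apply Hd|]|].
    + intros i Hi. unfold d. apply Nat.ltb_ge in Hi. rewrite Hi. reflexivity.
    + rewrite (psum_ext d bound_on_cell) by (intros i Hi; unfold d; apply Nat.ltb_lt in Hi; rewrite Hi; reflexivity).
      apply psum_cell_bound_le.
Qed.

(** * Plane geometry and lower bounds for beta *)

Lemma Rsup_ub (P : R -> Prop) x : bound P -> P x -> x <= Rsup P.
Proof.
  intros Hb Hx. unfold Rsup. destruct (excluded_middle_informative _) as [h|h].
  - destruct (completeness P (proj1 h) (proj2 h)) as [m [Hm1 Hm2]]. simpl. exact (Hm1 x Hx).
  - exfalso. apply h. split; [exact Hb|exists x; exact Hx].
Qed.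

Lemma Rsup_le (P : R -> Prop) b : (forall x, P x -> x <= b) -> (exists x, P x) -> Rsup P <= b.
Proof.
  intros Hb Hx. unfold Rsup. destruct (excluded_middle_informative _) as [h|h].
  - destruct (completeness P (proj1 h) (proj2 h)) as [m [Hm1 Hm2]]. simpl. exact (Hm2 b Hb).
  - exfalso. apply h. split; [exists b; exact Hb|exact Hx].
Qed.

Lemma Rsup_nonneg (P : R -> Prop) : (forall x, P x -> 0 <= x) -> 0 <= Rsup P.
Proof.
  intros H. unfold Rsup. destruct (excluded_middle_informative _) as [h|h]; [|lra].
  destruct (completeness P (proj1 h) (proj2 h)) as [m [Hm1 Hm2]]. simpl.
  destruct (proj2 h) as [x Hx]. apply Rle_trans with x; [apply H, Hx|apply Hm1, Hx].
Qed.

Lemma Rinf_ge (P : R -> Prop) b : (forall x, P x -> b <= x) -> (exists x, P x) -> b <= Rinf P.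
Proof.
  intros Hb [x Hx]. unfold Rinf.
  assert (Rsup (fun y => P (- y)) <= - b); [|lra].
  apply Rsup_le; [intros y Hy; pose proof (Hb _ Hy); lra|].
  exists (- x). rewrite Ropp_involutive. exact Hx.
Qed.

Lemma Rinf_le (P : R -> Prop) x : (forall y, P y -> 0 <= y) -> P x -> Rinf P <= x.
Proof.
  intros H0 Hx. unfold Rinf.
  assert (- x <= Rsup (fun y => P (- y))); [|lra].
  apply Rsup_ub; [exists 0; intros y Hy; pose proof (H0 _ Hy); lra|].
  rewrite Ropp_involutive. exact Hx.
Qed.

Definition vsub (a b : pt) : pt := (fst a - fst b, snd a - snd b).

Definition dot (a b : pt) : R := fst a * fst b + snd a * snd b.

Definition cross (a b : pt) : R := fst a * snd b - snd a * fst b.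

Lemma dot_self_nonneg a : 0 <= dot a a.
Proof. unfold dot. pose proof (Rle_0_sqr (fst a)). pose proof (Rle_0_sqr (snd a)). unfold Rsqr in *. lra. Qed.

Lemma dot_self_pos v : v <> (0, 0) -> 0 < dot v v.
Proof.
  intros Hv. destruct v as [v1 v2]. unfold dot. simpl.
  destruct (Req_dec v1 0) as [->|H1].
  - destruct (Req_dec v2 0) as [->|H2]; [exfalso; apply Hv; reflexivity|].
    pose proof (Rsqr_pos_lt v2 H2). unfold Rsqr in *. lra.
  - pose proof (Rsqr_pos_lt v1 H1). pose proof (Rle_0_sqr v2). unfold Rsqr in *. lra.
Qed.

Lemma dist_vsub x y : Defs.dist x y = sqrt (dot (vsub x y) (vsub x y)).
Proof. unfold Defs.dist, dot, vsub. simpl. f_equal. ring. Qed.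

Lemma dist_nonneg x y : 0 <= Defs.dist x y.
Proof. apply sqrt_pos. Qed.

Lemma dist_sym x y : Defs.dist x y = Defs.dist y x.
Proof. unfold Defs.dist. f_equal. ring. Qed.

Lemma dist_self x : Defs.dist x x = 0.
Proof. unfold Defs.dist. rewrite !Rminus_diag. simpl. rewrite Rmult_0_l, Rplus_0_r. apply sqrt_0. Qed.

Lemma abs_fst_le_dist p q : Rabs (fst p - fst q) <= Defs.dist p q.
Proof.
  unfold Defs.dist. rewrite <- sqrt_Rsqr_abs. apply sqrt_le_1_alt.
  pose proof (Rle_0_sqr (snd p - snd q)). unfold Rsqr in *. simpl. lra.
Qed.

Lemma Rabs_le_of_sqr_le a b : 0 <= b -> a * a <= b * b -> Rabs a <= b.
Proof. intros Hb H. apply Rsqr_le_abs_0 in H. rewrite (Rabs_right b) in H; lra. Qed.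

(* From [dot a b ^ 2 + cross a b ^ 2 = |a|^2 |b|^2]. *)
Lemma Rabs_dot_cross_le a b :
  Rabs (dot a b) <= sqrt (dot a a) * sqrt (dot b b) /\
  Rabs (cross a b) <= sqrt (dot a a) * sqrt (dot b b).
Proof.
  assert (E : sqrt (dot a a) * sqrt (dot b b) * (sqrt (dot a a) * sqrt (dot b b))
              = dot a a * dot b b).
  { replace (sqrt (dot a a) * sqrt (dot b b) * (sqrt (dot a a) * sqrt (dot b b)))
      with (sqrt (dot a a) * sqrt (dot a a) * (sqrt (dot b b) * sqrt (dot b b))) by ring.
    rewrite !sqrt_sqrt by apply dot_self_nonneg. reflexivity. }
  assert (Hid : dot a b * dot a b + cross a b * cross a b = dot a a * dot b b)
    by (unfold dot, cross; ring).
  assert (0 <= sqrt (dot a a) * sqrt (dot b b)) by (apply Rmult_le_pos; apply sqrt_pos).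
  split; apply Rabs_le_of_sqr_le; try assumption; rewrite E;
    [pose proof (Rle_0_sqr (cross a b))|pose proof (Rle_0_sqr (dot a b))]; unfold Rsqr in *; lra.
Qed.

Lemma dist_triangle x y z : Defs.dist x z <= Defs.dist x y + Defs.dist y z.
Proof.
  pose proof (dist_nonneg x y). pose proof (dist_nonneg y z).
  rewrite <- (Rabs_right (Defs.dist x z)) by (apply Rle_ge, dist_nonneg).
  apply Rabs_le_of_sqr_le; [lra|].
  destruct (Rabs_dot_cross_le (vsub x y) (vsub y z)) as [Hcs _].
  rewrite <- !dist_vsub in Hcs. pose proof (Rle_abs (dot (vsub x y) (vsub y z))).
  assert (Hsq : forall p q, Defs.dist p q * Defs.dist p q = dot (vsub p q) (vsub p q))
    by (intros; rewrite dist_vsub; apply sqrt_sqrt, dot_self_nonneg).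
  replace (Defs.dist x z * Defs.dist x z)
    with (Defs.dist x y * Defs.dist x y + Defs.dist y z * Defs.dist y z
          + 2 * dot (vsub x y) (vsub y z)) by (rewrite !Hsq; unfold dot, vsub; simpl; ring).
  nra.
Qed.

Lemma diam_nonneg E : 0 <= diam E.
Proof. apply Rsup_nonneg. intros d [x [y [_ [_ ->]]]]. apply dist_nonneg. Qed.

Lemma diam_cball_le x0 r : 0 < r -> diam (cball x0 r) <= 2 * r.
Proof.
  intros Hr. apply Rsup_le.
  - intros d [x [y [Hx [Hy ->]]]]. unfold cball in Hx, Hy.
    pose proof (dist_triangle x x0 y). rewrite (dist_sym x x0) in H. lra.
  - exists 0, x0, x0. unfold cball. rewrite dist_self. repeat split; lra.
Qed.

Lemma diam_cball_ge x0 r : 0 < r -> r <= diam (cball x0 r).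
Proof.
  intros Hr. apply Rsup_ub.
  - exists (2 * r). intros d [x [y [Hx [Hy ->]]]]. unfold cball in Hx, Hy.
    pose proof (dist_triangle x x0 y). rewrite (dist_sym x x0) in H. lra.
  - set (y := (fst x0 + r, snd x0)).
    assert (Hd : Defs.dist x0 y = r).
    { unfold Defs.dist, y. cbn [fst snd].
      replace ((fst x0 - (fst x0 + r)) ^ 2 + (snd x0 - snd x0) ^ 2) with (r * r) by ring.
      apply sqrt_square. lra. }
    exists x0, y. unfold cball. rewrite dist_self, Hd. repeat split; lra.
Qed.

Lemma dist_set_bounds x (L : pt -> Prop) y : L y -> 0 <= dist_set x L <= Defs.dist x y.
Proof.
  intros Hy. split.
  - apply Rinf_ge; [intros d [y' [_ ->]]; apply dist_nonneg|]. exists (Defs.dist x y), y. auto.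
  - apply Rinf_le; [intros d [y' [_ ->]]; apply dist_nonneg|]. exists y. auto.
Qed.

Section Line.

Variables (L : pt -> Prop) (p v : pt).
Hypothesis v_neq0 : v <> (0, 0).
Hypothesis L_def : forall z, L z <-> exists t : R, z = (fst p + t * fst v, snd p + t * snd v).

Lemma line_base : L p.
Proof. apply L_def. exists 0. destruct p; simpl; f_equal; ring. Qed.

Lemma cross_le_dist_set x : Rabs (cross (vsub x p) v) <= dist_set x L * sqrt (dot v v).
Proof.
  pose proof (sqrt_lt_R0 _ (dot_self_pos v v_neq0)) as Hnv.
  apply Rle_div_l; [exact Hnv|]. apply Rinf_ge.
  - intros d [y [Hy ->]]. apply L_def in Hy as [t ->].
    destruct (Rabs_dot_cross_le (vsub x (fst p + t * fst v, snd p + t * snd v)) v) as [_ H].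
    rewrite <- dist_vsub in H. apply Rle_div_l; [exact Hnv|].
    replace (cross (vsub x p) v)
      with (cross (vsub x (fst p + t * fst v, snd p + t * snd v)) v) by (unfold cross, vsub; simpl; ring).
    exact H.
  - exists (Defs.dist x p), p. split; [apply line_base|reflexivity].
Qed.

(* From [cross a b |v|^2 = cross a v dot b v - dot a v cross b v], where each
   [cross (vsub x p) v] is at most [W |v|] and each [dot . v] at most [s |v|]. *)
Lemma cross_le_of_near_line p1 p2 p3 s W :
  dist_set p1 L <= W -> dist_set p2 L <= W -> dist_set p3 L <= W ->
  Defs.dist p1 p2 <= s -> Defs.dist p1 p3 <= s ->
  Rabs (cross (vsub p2 p1) (vsub p3 p1)) <= 4 * W * s.
Proof.
  intros W1 W2 W3 S12 S13.
  pose proof (dot_self_pos v v_neq0) as Hvv. set (nv := sqrt (dot v v)).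
  assert (Hnv : 0 < nv) by (apply sqrt_lt_R0; exact Hvv).
  assert (Hnv2 : nv * nv = dot v v) by (apply sqrt_sqrt; lra).
  assert (Hc : forall x, dist_set x L <= W -> Rabs (cross (vsub x p) v) <= W * nv).
  { intros x Hx. eapply Rle_trans; [apply cross_le_dist_set|]. apply Rmult_le_compat_r; lra. }
  assert (Hd : forall x, Defs.dist p1 x <= s -> Rabs (dot (vsub x p1) v) <= s * nv).
  { intros x Hx. destruct (Rabs_dot_cross_le (vsub x p1) v) as [H _].
    rewrite <- dist_vsub, dist_sym in H. eapply Rle_trans; [exact H|]. apply Rmult_le_compat_r; lra. }
  pose proof (Hc p1 W1) as C1. pose proof (Hc p2 W2) as C2. pose proof (Hc p3 W3) as C3.
  pose proof (Hd p2 S12) as D2. pose proof (Hd p3 S13) as D3.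
  set (c1 := cross (vsub p1 p) v) in *. set (c2 := cross (vsub p2 p) v) in *.
  set (c3 := cross (vsub p3 p) v) in *.
  set (d2 := dot (vsub p2 p1) v) in *. set (d3 := dot (vsub p3 p1) v) in *.
  assert (Id : cross (vsub p2 p1) (vsub p3 p1) * (nv * nv) = (c2 - c1) * d3 - d2 * (c3 - c1)).
  { rewrite Hnv2. unfold c1, c2, c3, d2, d3, cross, dot, vsub. simpl. ring. }
  assert (Hdiff : forall a b, Rabs a <= W * nv -> Rabs b <= W * nv -> Rabs (a - b) <= 2 * W * nv).
  { intros a b Ha Hb. eapply Rle_trans; [apply Rabs_triang|]. rewrite Rabs_Ropp. lra. }
  assert (E1 : Rabs ((c2 - c1) * d3) <= 2 * W * nv * (s * nv)).
  { rewrite Rabs_mult. apply Rmult_le_compat; try apply Rabs_pos; auto. }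
  assert (E2 : Rabs (d2 * (c3 - c1)) <= s * nv * (2 * W * nv)).
  { rewrite Rabs_mult. apply Rmult_le_compat; try apply Rabs_pos; auto. }
  apply (Rmult_le_reg_r (nv * nv)); [nra|].
  rewrite <- (Rabs_right (nv * nv)) at 1 by nra. rewrite <- Rabs_mult, Id.
  eapply Rle_trans; [apply Rabs_triang|]. rewrite Rabs_Ropp. lra.
Qed.

End Line.

Lemma beta_ge_of_triangle (E : pt -> Prop) x0 r p1 p2 p3 s :
  0 < r -> 0 < s -> E p1 -> E p2 -> E p3 ->
  cball x0 r p1 -> cball x0 r p2 -> cball x0 r p3 ->
  Defs.dist p1 p2 <= s -> Defs.dist p1 p3 <= s ->
  Rabs (cross (vsub p2 p1) (vsub p3 p1)) / (8 * s * r) <= beta E (cball x0 r).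
Proof.
  intros Hr Hs E1 E2 E3 B1 B2 B3 S12 S13.
  unfold beta. destruct (excluded_middle_informative _) as [_|Hempty];
    [|exfalso; apply Hempty; exists p1; split; assumption].
  pose proof (diam_cball_le x0 r Hr). pose proof (diam_cball_ge x0 r Hr).
  apply Rinf_ge.
  - intros b [L [[p [v [Hv HL]]] ->]].
    set (W := Rsup (fun t => exists x, E x /\ cball x0 r x /\ t = dist_set x L)).
    assert (HW : forall x, E x -> cball x0 r x -> dist_set x L <= W).
    { intros x Ex Bx. apply Rsup_ub; [|exists x; auto].
      exists (r + Defs.dist x0 p). intros d [y [_ [By ->]]]. unfold cball in By.
      pose proof (dist_set_bounds y L p (line_base L p v HL)).
      pose proof (dist_triangle y x0 p). rewrite (dist_sym y x0) in H2. lra. }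
    pose proof (cross_le_of_near_line L p v Hv HL p1 p2 p3 s W
                  (HW p1 E1 B1) (HW p2 E2 B2) (HW p3 E3 B3) S12 S13) as Hcross.
    assert (0 <= W) by (pose proof (dist_set_bounds p1 L p (line_base L p v HL)); pose proof (HW p1 E1 B1); lra).
    apply Rle_trans with (W / (2 * r)).
    + apply Rle_div_l; [nra|]. unfold Rdiv. rewrite Rmult_assoc.
      replace (/ (2 * r) * (8 * s * r)) with (4 * s) by (field; lra). lra.
    + apply Rmult_le_compat_l; [lra|]. apply Rinv_le_contravar; lra.
  - set (L0 := fun z : pt => exists t : R, z = (0 + t * 1, 0 + t * 0)).
    exists (Rsup (fun t => exists x, E x /\ cball x0 r x /\ t = dist_set x L0) / diam (cball x0 r)).
    exists L0. split; [|reflexivity].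
    exists (0, 0), (1, 0). split; [intros H1; injection H1; lra|reflexivity].
Qed.

(** * Lower bound at each dyadic peak *)

Lemma image01_graph_dyadic m i : (i <= 2 ^ m)%nat -> image01 graph (graph (dyadic m i)).
Proof. intros Hi. exists (dyadic m i). split; [apply dyadic_in_01, Hi|reflexivity]. Qed.

Lemma takagi_dyadic_succ m i :
  takagi (dyadic m (i + 1)) = takagi (dyadic m i) + slope m i / 2 ^ m.
Proof. unfold slope. field. apply pow_nonzero. lra. Qed.

Lemma takagi_dyadic_odd m i :
  takagi (dyadic (S m) (2 * i + 1)) = takagi (dyadic m i) + (slope m i + coef m) / 2 ^ S m.
Proof.
  rewrite takagi_midpoint, takagi_dyadic_succ. simpl. field. apply pow_nonzero. lra.
Qed.

Lemma dist_graph_dyadic_odd m i :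
  Defs.dist (graph (dyadic m i)) (graph (dyadic (S m) (2 * i + 1))) <= (Rabs (slope m i) + 2) / 2 ^ m.
Proof.
  eapply Rle_trans; [apply dist_le_abs_sum|]. unfold graph; cbn [fst snd].
  rewrite takagi_dyadic_odd, dyadic_odd. pose proof (pow2_pos m).
  pose proof (coef_pos m). pose proof (coef_le_1 m). pose proof (Rabs_triang (slope m i) (coef m)).
  rewrite (Rabs_right (coef m)) in H2 by lra.
  replace (dyadic m i - (dyadic m i + / 2 ^ S m)) with (- (/ 2 ^ m / 2)) by (simpl; field; lra).
  replace (takagi (dyadic m i) - (takagi (dyadic m i) + (slope m i + coef m) / 2 ^ S m))
    with (- ((slope m i + coef m) * (/ 2 ^ m / 2))) by (simpl; field; lra).
  assert (0 < / 2 ^ m) by (apply Rinv_0_lt_compat; lra).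
  rewrite !Rabs_Ropp, Rabs_mult, (Rabs_right (/ 2 ^ m / 2)) by lra.
  assert (Rabs (slope m i + coef m) * (/ 2 ^ m / 2) <= (Rabs (slope m i) + 1) * (/ 2 ^ m / 2))
    by (apply Rmult_le_compat_r; lra).
  pose proof (Rabs_pos (slope m i)). unfold Rdiv in *. nra.
Qed.

Lemma dist_graph_dyadic_succ m i :
  Defs.dist (graph (dyadic m i)) (graph (dyadic m (i + 1))) <= (Rabs (slope m i) + 2) / 2 ^ m.
Proof.
  eapply Rle_trans; [apply dist_le_abs_sum|]. unfold graph; cbn [fst snd].
  rewrite takagi_dyadic_succ, dyadic_succ. pose proof (pow2_pos m).
  assert (0 < / 2 ^ m) by (apply Rinv_0_lt_compat; lra).
  replace (dyadic m i - (dyadic m i + / 2 ^ m)) with (- / 2 ^ m) by ring.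
  replace (takagi (dyadic m i) - (takagi (dyadic m i) + slope m i / 2 ^ m))
    with (- (slope m i * / 2 ^ m)) by (unfold Rdiv; ring).
  rewrite !Rabs_Ropp, Rabs_mult, (Rabs_right (/ 2 ^ m)) by lra. unfold Rdiv. nra.
Qed.

Lemma cross_graph_dyadic m i :
  Rabs (cross (vsub (graph (dyadic (S m) (2 * i + 1))) (graph (dyadic m i)))
              (vsub (graph (dyadic m (i + 1))) (graph (dyadic m i))))
  = coef m / (2 * 2 ^ m * 2 ^ m).
Proof.
  unfold cross, vsub, graph; cbn [fst snd].
  rewrite takagi_dyadic_odd, takagi_dyadic_succ, dyadic_odd, dyadic_succ.
  pose proof (pow2_pos m). pose proof (coef_pos m).
  replace (_ - _) with (- (coef m / (2 * 2 ^ m * 2 ^ m))) by (simpl; field; lra).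
  rewrite Rabs_Ropp. apply Rabs_right, Rle_ge, Rlt_le, Rdiv_lt_0_compat; [lra|].
  apply Rmult_lt_0_compat; lra.
Qed.

Lemma pow2m_of_nat m : pow2m (Z.of_nat m + 2) = / 2 ^ (m + 2).
Proof.
  unfold pow2m. rewrite powerRZ_neg', pow_powerRZ. do 2 f_equal. lia.
Qed.

Lemma Rpower_le_rpow x b r : 0 < x -> x <= b -> 0 < r -> Rpower x r <= rpow b r.
Proof.
  intros Hx Hb Hr. unfold rpow. destruct (Rlt_dec 0 b); [|lra].
  apply Rle_Rpower_l; lra.
Qed.

Definition beta_const (A : R) (e : nat) : R := / (4 * A * (4 + INR e) * 2 ^ e).

Lemma beta_const_pos A e : A > 1 -> 0 < beta_const A e.
Proof.
  intros HA. unfold beta_const. pose proof (pos_INR e). pose proof (pow2_pos e).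
  apply Rinv_0_lt_compat. repeat apply Rmult_lt_0_compat; lra.
Qed.

Lemma beta_ge_at_dyadic_peak n i x0 R s :
  (i + 1 <= 2 ^ n)%nat -> (Rabs (slope n i) + 2) / 2 ^ n <= s ->
  Defs.dist x0 (graph (dyadic n i)) + s <= R ->
  coef n / (2 * 2 ^ n * 2 ^ n) / (8 * s * R) <= beta (image01 graph) (cball x0 R).
Proof.
  intros Hi Hs HR.
  assert (0 < s) by (eapply Rlt_le_trans; [|exact Hs];
    apply Rdiv_lt_0_compat; [pose proof (Rabs_pos (slope n i)); lra|apply pow2_pos]).
  pose proof (dist_nonneg x0 (graph (dyadic n i))).
  assert (Hball : forall P, Defs.dist (graph (dyadic n i)) P <= s -> cball x0 R P).
  { intros P HP. unfold cball. pose proof (dist_triangle x0 (graph (dyadic n i)) P). lra. }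
  assert (S12 := Rle_trans _ _ _ (dist_graph_dyadic_odd n i) Hs).
  assert (S13 := Rle_trans _ _ _ (dist_graph_dyadic_succ n i) Hs).
  rewrite <- (cross_graph_dyadic n i).
  apply beta_ge_of_triangle; try assumption; try lra.
  - apply image01_graph_dyadic. lia.
  - apply image01_graph_dyadic. simpl. lia.
  - apply image01_graph_dyadic, Hi.
  - apply Hball. rewrite dist_self. lra.
  - apply Hball, S12.
  - apply Hball, S13.
Qed.

(* The ball of radius [A 2^-(m+2)] centred near [graph (dyadic m u)] contains the
   peak added at level [m + e] above the cell [2^e u], so its [beta] is of order
   [coef (m + e)]. *)
Lemma S_term_ge A r e m u x0 :
  A > 1 -> 0 < r -> (4 + INR e) * 4 <= (A - 1) * 2 ^ e ->
  (u < 2 ^ m)%nat -> Rabs (slope m u) <= 2 ->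
  Defs.dist (graph (dyadic m u)) x0 < / 2 ^ (m + 2) ->
  Rpower (beta_const A e * coef (m + e)) r / 2 ^ (m + 2)
  <= S_term (image01 graph) A r (Z.of_nat m + 2, x0)%Z.
Proof.
  intros HA Hr He Hu HD Hx0.
  set (n := (m + e)%nat). set (i := (2 ^ e * u)%nat). set (q := / 2 ^ (m + 2)) in *.
  set (s := (4 + INR e) / 2 ^ n).
  pose proof (pow2_pos n). pose proof (pow2_pos e). pose proof (pos_INR e).
  assert (Hq : 0 < q) by apply Rinv_0_lt_compat, pow2_pos.
  assert (Hq_s : s = 4 * (4 + INR e) / 2 ^ e * q).
  { unfold s, q, n. rewrite !pow_add. simpl. field. split; apply pow_nonzero; lra. }
  assert (Hsq : s <= (A - 1) * q).
  { rewrite Hq_s. apply Rmult_le_compat_r; [lra|]. apply Rle_div_l; lra. }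
  assert (Hslope : (Rabs (slope n i) + 2) / 2 ^ n <= s).
  { pose proof (slope_shift m u e). rewrite Nat.add_comm in H2. fold n i in H2.
    pose proof (Rabs_triang (slope n i - slope m u) (slope m u)).
    replace (slope n i - slope m u + slope m u) with (slope n i) in H3 by ring.
    apply Rmult_le_compat_r; [apply Rlt_le, Rinv_0_lt_compat|]; lra. }
  assert (Hi : (i + 1 <= 2 ^ n)%nat).
  { unfold i, n. rewrite Nat.pow_add_r. pose proof (Nat.pow_nonzero 2 e). nia. }
  assert (Hcentre : Defs.dist x0 (graph (dyadic n i)) + s <= A * q).
  { unfold n, i. rewrite dyadic_shift, dist_sym. lra. }
  pose proof (beta_ge_at_dyadic_peak n i x0 (A * q) s Hi Hslope Hcentre) as Hbeta.
  replace (coef n / (2 * 2 ^ n * 2 ^ n) / (8 * s * (A * q))) with (beta_const A e * coef n) in Hbeta.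
  2:{ unfold beta_const. rewrite Hq_s. unfold q, n. rewrite !pow_add. simpl.
       pose proof (pow2_pos m). field. repeat split; lra. }
  unfold S_term, Rdiv. cbn [fst snd]. rewrite pow2m_of_nat. fold q.
  pose proof (beta_const_pos A e HA). pose proof (coef_pos n).
  pose proof (diam_cball_ge x0 (A * q) ltac:(nra)).
  apply Rmult_le_compat; [apply Rlt_le, exp_pos|lra|apply Rpower_le_rpow; nra|nra].
Qed.

(** * Divergence of the beta sum *)

Lemma pow2_mul_Rpower_block_coef k r J : 0 < k ->
  2 ^ J * Rpower (k * block_coef J) r
  = Rpower k r * exp (INR J * (ln 2 * (1 - r / 2)) - r * ln (INR J + 1)).
Proof.
  intros Hk. pose proof (block_coef_pos J). pose proof (pos_INR J).
  assert (Hsqrt : 0 < sqrt 2) by (apply sqrt_lt_R0; lra).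
  assert (Hln_sqrt : ln (sqrt 2) = ln 2 / 2).
  { rewrite <- (Rsqr_sqrt 2) at 2 by lra. unfold Rsqr. rewrite ln_mult by lra. field. }
  assert (Hln_c : ln (block_coef J) = - (INR J * (ln 2 / 2) + ln (INR J + 1))).
  { unfold block_coef.
    rewrite ln_Rinv, ln_mult, ln_pow, Hln_sqrt by (try apply Rmult_lt_0_compat; try apply pow_lt; lra).
    reflexivity. }
  rewrite <- Rpower_mult_distr by assumption. unfold Rpower at 2. rewrite Hln_c.
  replace (2 ^ J) with (exp (INR J * ln 2)) by (rewrite <- ln_pow, exp_ln; [reflexivity|apply pow_lt|]; lra).
  rewrite Rmult_comm, Rmult_assoc, <- exp_plus. apply f_equal, f_equal. lra.
Qed.

Lemma pow2_mul_Rpower_block_coef_unbounded k r B e : 0 < r < 2 -> 0 < k ->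
  exists J, (e < 2 ^ J)%nat /\ B < 2 ^ J * Rpower (k * block_coef J) r.
Proof.
  intros Hr Hk.
  set (K := Rpower k r). assert (HK : 0 < K) by apply exp_pos.
  set (al := ln 2 * (1 - r / 2)). assert (Hal : 0 < al) by (pose proof ln_lt_2; unfold al; nra).
  set (B1 := Rabs (B / K)). pose proof (Rabs_pos (B / K)) as HB1. fold B1 in HB1.
  destruct (nat_above ((2 * r + al + B1) / al + 1 + INR e)) as [t Ht].
  pose proof (pos_INR e).
  assert (Hquot : 0 <= (2 * r + al + B1) / al) by (apply Rdiv_le_0_compat; lra).
  assert (Hte : (e + 1 <= t)%nat) by (apply INR_le; rewrite plus_INR; simpl; lra).
  (* With [J + 1 = t^2], [ln (J + 1) <= 2 t] is negligible against [J al]. *)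
  set (J := (t * t - 1)%nat). exists J. split.
  { pose proof (Nat.pow_gt_lin_r 2 J ltac:(lia)). unfold J in *. nia. }
  assert (HtR : 1 <= INR t) by lra.
  assert (HJ : INR J + 1 = INR t * INR t).
  { unfold J. rewrite <- mult_INR, <- S_INR. f_equal. nia. }
  rewrite pow2_mul_Rpower_block_coef by exact Hk. fold K al.
  set (y := INR J * al - r * ln (INR J + 1)).
  assert (Hy : B1 <= y).
  { unfold y. rewrite HJ, ln_mult by lra. replace (INR J) with (INR t * INR t - 1) by lra.
    assert (Hln : ln (INR t) <= INR t).
    { pose proof (exp_ineq1_le (ln (INR t))). rewrite exp_ln in H0 by lra. lra. }
    assert (2 * r + al + B1 + al <= al * INR t).
    { apply (Rmult_le_compat_l al) in Ht; [|lra].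
      replace (al * ((2 * r + al + B1) / al + 1 + INR e)) with (2 * r + al + B1 + al + al * INR e)
        in Ht by (field; lra).
      nra. }
    nra. }
  assert (B <= K * B1).
  { pose proof (Rle_abs (B / K)). apply (Rmult_le_compat_l K) in H0; [|lra].
    replace (K * (B / K)) with B in H0 by (field; lra). exact H0. }
  pose proof (exp_ineq1_le y). nra.
Qed.

(* For such [e] the peak at level [m + e], of size [(4 + e) 2^-(m+e)], fits into the
   inflation margin [(A - 1) 2^-(m+2)] of the balls at level [m + 2]. *)
Lemma exists_scale_gap A : A > 1 -> exists e : nat, (4 + INR e) * 4 <= (A - 1) * 2 ^ e.
Proof.
  intros HA. destruct (nat_above (16 / (A - 1))) as [t Ht].
  exists (t + t)%nat. rewrite pow_add, plus_INR.
  pose proof (pow2_ge_succ t). pose proof (pos_INR t).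
  assert (16 <= (A - 1) * (INR t + 1)).
  { apply Rle_div_l in Ht; lra. }
  assert ((A - 1) * ((INR t + 1) * (INR t + 1)) <= (A - 1) * (2 ^ t * 2 ^ t))
    by (apply Rmult_le_compat_l; [lra|apply Rmult_le_compat; lra]).
  nra.
Qed.

Definition small_slope (m u : nat) : bool := if Rle_dec (Rabs (slope m u)) 2 then true else false.

Lemma count_small_slope m : 2 ^ m / 4 <= INR (length (filter (small_slope m) (seq 0 (2 ^ m)))).
Proof.
  assert (Hind : forall K, psum (fun u => 1 - / 4 * (slope m u * slope m u)) K
                          <= INR (length (filter (small_slope m) (seq 0 K)))).
  { induction K; [simpl; lra|].
    rewrite seq_S, filter_app, length_app, plus_INR. cbn [psum filter]. rewrite Nat.add_0_l.
    destruct (small_slope m K) eqn:Hs; cbn [length INR]; unfold small_slope in Hs;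
      destruct (Rle_dec (Rabs (slope m K)) 2); try discriminate.
    - pose proof (Rle_0_sqr (slope m K)). unfold Rsqr in *. lra.
    - assert (Rabs (slope m K) * Rabs (slope m K) = slope m K * slope m K)
        by (rewrite <- Rabs_mult; apply Rabs_right, Rle_ge, Rle_0_sqr).
      nra. }
  eapply Rle_trans; [|apply Hind].
  rewrite (psum_ext _ (fun u => 1 + (- / 4) * (slope m u * slope m u))) by (intros; ring).
  rewrite psum_plus, psum_const, psum_scal, sum_slope_sq, INR_pow2.
  pose proof (psum_coef_sq_le m). pose proof (pow2_pos m). nra.
Qed.

Definition S_sum (E : pt -> Prop) (A r : R) (l : list (Z * pt)) : R :=
  fold_right (fun kx acc => S_term E A r kx + acc) 0 l.

Lemma S_sum_app E A r l1 l2 : S_sum E A r (l1 ++ l2) = S_sum E A r l1 + S_sum E A r l2.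
Proof. induction l1 as [|kx l1 IH]; simpl; [ring|]. unfold S_sum in *. rewrite IH. ring. Qed.

Lemma S_sum_map_ge {T} E A r (F : T -> Z * pt) l c :
  (forall x, In x l -> c <= S_term E A r (F x)) -> INR (length l) * c <= S_sum E A r (map F l).
Proof.
  induction l as [|x l IH]; intros H; [simpl; lra|].
  cbn [map length]. rewrite S_INR. unfold S_sum in *. cbn [fold_right].
  pose proof (H x (or_introl eq_refl)). pose proof (IH (fun y Hy => H y (or_intror Hy))). lra.
Qed.

Lemma S_sum_flat_map_ge {T} E A r (f : T -> list (Z * pt)) l c :
  (forall x, In x l -> c <= S_sum E A r (f x)) -> INR (length l) * c <= S_sum E A r (flat_map f l).
Proof.
  induction l as [|x l IH]; intros H; [simpl; lra|].
  cbn [flat_map length]. rewrite S_INR, S_sum_app.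
  pose proof (H x (or_introl eq_refl)). pose proof (IH (fun y Hy => H y (or_intror Hy))). lra.
Qed.

Lemma NoDup_flat_map_keyed {T U} (f : T -> list U) (key : U -> T) l :
  NoDup l -> (forall x, NoDup (f x)) -> (forall x y, In y (f x) -> key y = x) ->
  NoDup (flat_map f l).
Proof.
  intros Hl Hf Hkey. induction Hl as [|x l Hx Hl IH]; [constructor|].
  cbn [flat_map]. apply NoDup_app; [apply Hf|exact IH|].
  intros y Hy1 Hy2. apply in_flat_map in Hy2 as [x' [Hx' Hy2]].
  apply Hx. rewrite <- (Hkey x y Hy1), (Hkey x' y Hy2). exact Hx'.
Qed.

Definition level_balls (F : nat -> nat -> pt) (m : nat) : list (Z * pt) :=
  map (fun u => (Z.of_nat m + 2, F m u)%Z) (filter (small_slope m) (seq 0 (2 ^ m))).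

Section Levels.

Variables (X : Z -> pt -> Prop) (F : nat -> nat -> pt).
Hypothesis F_net : forall m u, (u < 2 ^ m)%nat ->
  X (Z.of_nat m + 2)%Z (F m u) /\ Defs.dist (graph (dyadic m u)) (F m u) < / 2 ^ (m + 2).

Lemma in_level_balls m kx : In kx (level_balls F m) ->
  X (fst kx) (snd kx) /\ fst kx = (Z.of_nat m + 2)%Z.
Proof.
  unfold level_balls. intros H. apply in_map_iff in H as [u [<- Hu]].
  apply filter_In in Hu as [Hu _]. apply in_seq in Hu. split; [apply F_net; lia|reflexivity].
Qed.

(* Distinct dyadic points of level [m] are [2^-m] apart, while their net points
   are [2^-(m+2)]-close to them. *)
Lemma NoDup_level_balls m : NoDup (level_balls F m).
Proof.
  apply NoDup_map_NoDup_ForallPairs; [|apply NoDup_filter, seq_NoDup].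
  intros u v Hu Hv Heq. apply filter_In in Hu as [Hu _], Hv as [Hv _].
  apply in_seq in Hu, Hv. injection Heq as Heq.
  destruct (Nat.eq_dec u v) as [|Hne]; [assumption|exfalso].
  destruct (F_net m u ltac:(lia)) as [_ Hdu]. destruct (F_net m v ltac:(lia)) as [_ Hdv].
  rewrite Heq in Hdu.
  pose proof (dist_triangle (graph (dyadic m u)) (F m v) (graph (dyadic m v))).
  rewrite (dist_sym (F m v)) in H.
  pose proof (abs_fst_le_dist (graph (dyadic m u)) (graph (dyadic m v))) as Hfst.
  unfold graph at 1 2 in Hfst. cbn [fst] in Hfst.
  assert (Hgap : / 2 ^ m <= Rabs (dyadic m u - dyadic m v)).
  { assert (Huv : (u + 1 <= v \/ v + 1 <= u)%nat) by lia.
    unfold dyadic. pose proof (pow2_pos m).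
    replace (INR u / 2 ^ m - INR v / 2 ^ m) with ((INR u - INR v) * / 2 ^ m) by (field; lra).
    rewrite Rabs_mult, (Rabs_right (/ 2 ^ m)) by (apply Rle_ge, Rlt_le, Rinv_0_lt_compat; lra).
    rewrite <- (Rmult_1_l (/ 2 ^ m)) at 1. apply Rmult_le_compat_r; [apply Rlt_le, Rinv_0_lt_compat; lra|].
    destruct Huv as [Huv|Huv]; apply le_INR in Huv; rewrite plus_INR in Huv; simpl in Huv;
      [rewrite Rabs_left1 by lra|rewrite Rabs_right by lra]; lra. }
  assert (/ 2 ^ (m + 2) + / 2 ^ (m + 2) < / 2 ^ m).
  { pose proof (Rinv_0_lt_compat _ (pow2_pos m)). rewrite pow_add.
    replace (/ (2 ^ m * 2 ^ 2) + / (2 ^ m * 2 ^ 2)) with (/ 2 ^ m / 2) by (field; apply pow_nonzero; lra).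
    lra. }
  lra.
Qed.

Lemma NoDup_levels l : NoDup l -> NoDup (flat_map (level_balls F) l).
Proof.
  intros Hl. apply (NoDup_flat_map_keyed _ (fun kx => Z.to_nat (fst kx - 2))); [exact Hl|apply NoDup_level_balls|].
  intros m kx Hkx. rewrite (proj2 (in_level_balls m kx Hkx)). lia.
Qed.

Lemma S_sum_level_balls_ge A r e m : A > 1 -> 0 < r -> (4 + INR e) * 4 <= (A - 1) * 2 ^ e ->
  Rpower (beta_const A e * coef (m + e)) r / 16 <= S_sum (image01 graph) A r (level_balls F m).
Proof.
  intros HA Hr He. set (c := Rpower (beta_const A e * coef (m + e)) r / 2 ^ (m + 2)).
  eapply Rle_trans; [|apply (S_sum_map_ge _ _ _ _ _ c)].
  - assert (0 <= c) by (apply Rdiv_le_0_compat; [apply Rlt_le, exp_pos|apply pow2_pos]).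
    eapply Rle_trans; [|apply Rmult_le_compat_r; [exact H|apply count_small_slope]].
    unfold c. rewrite pow_add. pose proof (pow2_pos m). apply Req_le. simpl. field. lra.
  - intros u Hu. apply filter_In in Hu as [Hu Hs]. apply in_seq in Hu.
    unfold small_slope in Hs. destruct (Rle_dec _ 2) as [Hsmall|]; [|discriminate].
    unfold c. apply (S_term_ge A r e m u); try assumption; [lia|apply F_net; lia].
Qed.

Lemma S_sum_levels_block_ge A r e J : A > 1 -> 0 < r -> (4 + INR e) * 4 <= (A - 1) * 2 ^ e ->
  (e < 2 ^ J)%nat ->
  2 ^ J * (Rpower (beta_const A e * block_coef J) r / 16)
  <= S_sum (image01 graph) A r (flat_map (level_balls F) (seq (2 ^ J - 1 - e) (2 ^ J))).
Proof.
  intros HA Hr He HeJ. rewrite <- INR_pow2.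
  replace (INR (2 ^ J)) with (INR (length (seq (2 ^ J - 1 - e) (2 ^ J)))) by now rewrite length_seq.
  apply S_sum_flat_map_ge. intros m Hm. apply in_seq in Hm.
  rewrite <- (coef_on_block J (m + e - (2 ^ J - 1))) by lia.
  replace (2 ^ J - 1 + (m + e - (2 ^ J - 1)))%nat with (m + e)%nat by lia.
  apply S_sum_level_balls_ge; assumption.
Qed.

End Levels.

Lemma exists_net_selection X : multires_nets (image01 graph) X ->
  exists F : nat -> nat -> pt, forall m u, (u < 2 ^ m)%nat ->
    X (Z.of_nat m + 2)%Z (F m u) /\ Defs.dist (graph (dyadic m u)) (F m u) < / 2 ^ (m + 2).
Proof.
  intros [_ Hnet].
  assert (Hpick : forall mu : nat * nat, exists y, (snd mu < 2 ^ fst mu)%nat ->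
    X (Z.of_nat (fst mu) + 2)%Z y /\ Defs.dist (graph (dyadic (fst mu) (snd mu))) y < / 2 ^ (fst mu + 2)).
  { intros [m u]. cbn [fst snd]. destruct (Nat.lt_ge_cases u (2 ^ m)) as [Hu|Hu].
    - destruct (Hnet (Z.of_nat m + 2)%Z) as [_ [_ Hcover]].
      destruct (Hcover (graph (dyadic m u))) as [y [HXy Hy]].
      + apply image01_graph_dyadic. lia.
      + rewrite pow2m_of_nat in Hy. exists y. auto.
    - exists (0, 0). lia. }
  destruct (choice _ Hpick) as [G HG]. exists (fun m u => G (m, u)).
  intros m u Hu. exact (HG (m, u) Hu).
Qed.

Theorem mainTheorem7 :
  exists g : R -> pt,
    continuous_on_01 g /\
    H1_finite (image01 g) /\
    forall (A : R), A > 1 ->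
    forall (X : Z -> pt -> Prop), multires_nets (image01 g) X ->
    forall eps : R, 0 < eps < 2 ->
      S_infinite (image01 g) A X (2 - eps).
Proof.
  exists graph. split; [exact graph_continuous|split; [exact graph_H1_finite|]].
  intros A HA X HX eps Heps M.
  assert (Hr : 0 < 2 - eps < 2) by lra.
  destruct (exists_scale_gap A HA) as [e He].
  destruct (exists_net_selection X HX) as [F HF].
  destruct (pow2_mul_Rpower_block_coef_unbounded (beta_const A e) (2 - eps) (16 * M) e Hr
              (beta_const_pos A e HA)) as [J [HeJ HJ]].
  exists (flat_map (level_balls F) (seq (2 ^ J - 1 - e) (2 ^ J))). split; [|split].
  - apply (NoDup_levels X F HF), seq_NoDup.
  - intros kx Hkx. apply in_flat_map in Hkx as [m [_ Hkx]]. exact (proj1 (in_level_balls X F HF m kx Hkx)).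
  - pose proof (S_sum_levels_block_ge X F HF A (2 - eps) e J HA (proj1 Hr) He HeJ).
    pose proof (diam_nonneg (image01 graph)). unfold S_sum in *. lra.
Qed.
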